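(* Let $L$ be a PG-lattice and $M$ a faithful multiplication PG-lattice $L$-module with $I_M$ compact, and let $\delta_1(A)=(\sqrt{(A:I_M)})I_M$ for $A\in M$. If $\delta$ is an expansion function on $M$ such that $\delta(A)\leqslant\delta_1(A)$ for all $A\in M$, then $\delta(P)=\delta_1(P)$ for every $\delta$-primary element $P\in M$.
   Context: $L$ is a multiplicative lattice (complete lattice with commutative, associative multiplication distributing over arbitrary joins, identity $1$, least $0$), compactly generated, $1$ compact, finite products of compact elements compact; $L_\ast$ = compact elements. An $L$-module is a complete lattice $M$ (least $O_M$, greatest $I_M$) with product $aB\in M$ satisfying $(\bigvee a_\alpha)A=\bigvee(a_\alpha A)$, $a(\bigvee A_\alpha)=\bigvee(aA_\alpha)$, $(ab)A=a(bA)$, $1A=A$, $0A=O_M$. $(A:B)=\bigvee\{x\in L:xB\leqslant A\}$ for $A,B\in M$; $\sqrt a=\bigvee\{x\in L_\ast:x^n\leqslant a\text{ for some }n\in\mathbb Z_+\}$. $e\in L$ is principal if $a\wedge be=((a:e)\wedge b)e$ and $(ae\vee b):e=(b:e)\vee a$ for all $a,b\in L$; $L$ is a PG-lattice if every element is a join of principal elements. $N\in M$ is principal if $(b\wedge(B:N))N=bN\wedge B$ and $b\vee(B:N)=((bN\vee B):N)$ for all $b\in L,B\in M$; $M$ is a PG-lattice module if every element is a join of principal elements. $M$ is faithful if $(O_M:I_M)=0$; a multiplication module if every $N\in M$ is $aI_M$ for some $a\in L$. Proper means $<I_M$. An expansion function on $M$ is a map $\delta:M\to M$ with $A\leqslant\delta(A)$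 and $A\leqslant B\Rightarrow\delta(A)\leqslant\delta(B)$; a proper $P\in M$ is $\delta$-primary if for all $a\in L$, $A\in M$: $aA\leqslant P$ implies $A\leqslant P$ or $aI_M\leqslant\delta(P)$. *)

From Stdlib Require Import List.

Record CLattice := {
  cl_car :> Type;
  cl_le : cl_car -> cl_car -> Prop;
  cl_le_refl : forall x, cl_le x x;
  cl_le_trans : forall x y z, cl_le x y -> cl_le y z -> cl_le x z;
  cl_le_antisym : forall x y, cl_le x y -> cl_le y x -> x = y;
  cl_sup : (cl_car -> Prop) -> cl_car;
  cl_sup_ub : forall (S : cl_car -> Prop) x, S x -> cl_le x (cl_sup S);
  cl_sup_least : forall (S : cl_car -> Prop) y,
      (forall x, S x -> cl_le x y) -> cl_le (cl_sup S) y
}.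

Arguments cl_le {c} _ _.
Arguments cl_sup {c} _.

Section LatticeOps.
Variable X : CLattice.
Definition cl_bot : X := cl_sup (fun _ => False).
Definition cl_top : X := cl_sup (fun _ => True).
Definition cl_join (x y : X) : X := cl_sup (fun z => z = x \/ z = y).
Definition cl_meet (x y : X) : X := cl_sup (fun z => cl_le z x /\ cl_le z y).
Definition cl_compact (c : X) : Prop :=
  forall S : X -> Prop, cl_le c (cl_sup S) ->
    exists l : list X, (forall x, In x l -> S x) /\
                       cl_le c (cl_sup (fun x => In x l)).
End LatticeOps.

Arguments cl_bot {X}.
Arguments cl_top {X}.
Arguments cl_join {X} _ _.
Arguments cl_meet {X} _ _.
Arguments cl_compact {X} _.

Record MultLattice := {
  ml_lat :> CLattice;
  ml_mul : ml_lat -> ml_lat -> ml_lat;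
  ml_one : ml_lat;
  ml_mulC : forall a b, ml_mul a b = ml_mul b a;
  ml_mulA : forall a b c, ml_mul a (ml_mul b c) = ml_mul (ml_mul a b) c;
  ml_mul1 : forall a, ml_mul ml_one a = a;
  ml_mul_sup : forall a (S : ml_lat -> Prop),
      ml_mul a (cl_sup S) = cl_sup (fun y => exists x, S x /\ y = ml_mul a x);
  ml_cgen : forall a : ml_lat,
      a = cl_sup (fun x => cl_compact x /\ cl_le x a);
  ml_one_compact : cl_compact ml_one;
  ml_mul_compact : forall a b, cl_compact a -> cl_compact b ->
      cl_compact (ml_mul a b)
}.

Arguments ml_mul {m} _ _.
Arguments ml_one {m}.

Fixpoint ml_pow {L : MultLattice} (x : L) (n : nat) : L :=
  match n with O => ml_one | S k => ml_mul x (ml_pow x k) end.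

Definition ml_res {L : MultLattice} (a e : L) : L :=
  cl_sup (fun x => cl_le (ml_mul x e) a).

Definition ml_sqrt {L : MultLattice} (a : L) : L :=
  cl_sup (fun x => cl_compact x /\ exists n, cl_le (ml_pow x (S n)) a).

Definition ml_principal {L : MultLattice} (e : L) : Prop :=
  (forall a b : L, cl_meet a (ml_mul b e) = ml_mul (cl_meet (ml_res a e) b) e) /\
  (forall a b : L, ml_res (cl_join (ml_mul a e) b) e = cl_join (ml_res b e) a).

Definition PG_lattice (L : MultLattice) : Prop :=
  forall a : L, exists S : L -> Prop,
    (forall x, S x -> ml_principal x) /\ a = cl_sup S.

Record LModule (L : MultLattice) := {
  lm_lat :> CLattice;
  lm_act : L -> lm_lat -> lm_lat;
  lm_act_supl : forall (S : L -> Prop) (A : lm_lat),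
      lm_act (cl_sup S) A = cl_sup (fun B => exists a, S a /\ B = lm_act a A);
  lm_act_supr : forall (a : L) (T : lm_lat -> Prop),
      lm_act a (cl_sup T) = cl_sup (fun B => exists A, T A /\ B = lm_act a A);
  lm_act_mul : forall a b A, lm_act (ml_mul a b) A = lm_act a (lm_act b A);
  lm_act_one : forall A, lm_act ml_one A = A;
  lm_act_zero : forall A, lm_act cl_bot A = cl_bot
}.

Arguments lm_act {L l} _ _.

Section ModuleDefs.
Variable L : MultLattice.
Variable M : LModule L.

Definition lm_res (A B : M) : L := cl_sup (fun x => cl_le (lm_act x B) A).

Definition lm_principal (N : M) : Prop :=
  (forall (b : L) (B : M),
      lm_act (cl_meet b (lm_res B N)) N = cl_meet (lm_act b N) B) /\
  (forall (b : L) (B : M),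
      cl_join b (lm_res B N) = lm_res (cl_join (lm_act b N) B) N).

Definition PG_module : Prop :=
  forall A : M, exists S : M -> Prop,
    (forall N, S N -> lm_principal N) /\ A = cl_sup S.

Definition faithful : Prop := lm_res (cl_bot : M) cl_top = (cl_bot : L).

Definition multiplication_module : Prop :=
  forall N : M, exists a : L, N = lm_act a cl_top.

Definition expansion (delta : M -> M) : Prop :=
  (forall A, cl_le A (delta A)) /\
  (forall A B, cl_le A B -> cl_le (delta A) (delta B)).

Definition proper (P : M) : Prop := cl_le P cl_top /\ P <> cl_top.

Definition delta_primary (delta : M -> M) (P : M) : Prop :=
  proper P /\
  forall (a : L) (A : M), cl_le (lm_act a A) P ->
    cl_le A P \/ cl_le (lm_act a cl_top) (delta P).

Definition delta1 (A : M) : M := lm_act (ml_sqrt (lm_res A cl_top)) cl_top.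
End ModuleDefs.

Arguments lm_res {L M} _ _.
Arguments lm_principal {L M} _.
Arguments PG_module {L} M.
Arguments faithful {L} M.
Arguments multiplication_module {L} M.
Arguments expansion {L M} _.
Arguments proper {L M} _.
Arguments delta_primary {L M} _ _.
Arguments delta1 {L M} _.


(* The inequality delta(P) <= delta_1(P) is a hypothesis, so only
   delta_1(P) <= delta(P) must be shown.  Since delta_1(P) is the join of the
   x I_M over compact x with x^k <= (P : I_M) for some k >= 1, it suffices to
   show x I_M <= delta(P) for each such x.  From x^k <= (P : I_M) we get
   x^k I_M <= P, and peeling off one factor at a time with the delta-primary
   property, x (x^(k-1) I_M) <= P gives either x I_M <= delta(P) (done) or
   x^(k-1) I_M <= P; at k = 0 this would say I_M <= P, impossible for a proper
   P. *)

Section ModuleFacts.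
Variable L : MultLattice.
Variable M : LModule L.

(* The action is monotone in the scalar: a <= b implies aA <= bA, because
   b = a \/ b and the action distributes over joins of scalars. *)
Lemma act_mono (a b : L) (A : M) :
  cl_le a b -> cl_le (lm_act a A) (lm_act b A).
Proof.
  intros hab.
  assert (b_as_join : b = cl_sup (fun z : L => z = a \/ z = b)).
  { apply cl_le_antisym.
    - apply cl_sup_ub. right; reflexivity.
    - apply cl_sup_least. intros x [-> | ->]; [exact hab | apply cl_le_refl]. }
  rewrite b_as_join, lm_act_supl.
  apply cl_sup_ub. exists a; split; [left | ]; reflexivity.
Qed.

Lemma res_act (P B : M) : cl_le (lm_act (lm_res P B) B) P.
Proof.
  unfold lm_res. rewrite lm_act_supl. apply cl_sup_least.
  intros C [a [ha ->]]. exact ha.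
Qed.

Lemma proper_not_above_top (P : M) : proper P -> ~ cl_le (cl_top : M) P.
Proof.
  intros [hPtop hPne] htopP. apply hPne. apply cl_le_antisym; assumption.
Qed.

Variable delta : M -> M.

Lemma delta_primary_pow (P : M) (x : L) (k : nat) :
  delta_primary delta P ->
  cl_le (lm_act (ml_pow x k) (cl_top : M)) P ->
  cl_le (lm_act x (cl_top : M)) (delta P).
Proof.
  intros [hproper hprim].
  induction k as [| k IH]; simpl; intros hpow.
  - rewrite lm_act_one in hpow.
    exfalso; exact (proper_not_above_top P hproper hpow).
  - rewrite lm_act_mul in hpow.
    destruct (hprim x _ hpow) as [hpow' | hdone]; [exact (IH hpow') | exact hdone].
Qed.

Lemma delta1_le_delta_primary (P : M) :
  delta_primary delta P -> cl_le (delta1 P) (delta P).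
Proof.
  intros hP.
  unfold delta1, ml_sqrt. rewrite lm_act_supl. apply cl_sup_least.
  intros C [x [[_ [n hn]] ->]].
  apply (delta_primary_pow P x (S n) hP).
  eapply cl_le_trans; [apply act_mono; exact hn | apply res_act].
Qed.

End ModuleFacts.

Theorem theorem2p13 (L : MultLattice) (M : LModule L)
  (hL : PG_lattice L) (hPG : PG_module M) (hfaith : faithful M)
  (hmult : multiplication_module M) (hIc : cl_compact (cl_top : M))
  (delta : M -> M) (hdelta : expansion delta)
  (hle : forall A : M, cl_le (delta A) (delta1 A)) :
  forall P : M, delta_primary delta P -> delta P = delta1 P.
Proof.
  intros P hP.
  apply cl_le_antisym.
  - apply hle.
  - exact (delta1_le_delta_primary L M delta P hP).
Qed.
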